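(* Let $\alpha\in\mathbb{N}_0$. For all $y\in C^{(2\alpha+4)}(0,\infty)$ and $x>0$, $$(-1)^{\alpha+1}x^2(x^{-1}D_x)^{2\alpha+4}\big[x^{2\alpha+2}y(x)\big]=(-1)^{\alpha+1}\sum_{i=1}^{2\alpha+4}A_i^{\alpha}x^{i-2\alpha-4}D_x^iy(x),$$ where $$A_i^{\alpha}=\frac{(\alpha+1)!}{(i-1)!}\sum_{j=\max(i,\alpha+3)}^{2\alpha+4}(-1)^{i+j}\binom{2\alpha+4}{j}\frac{(2j-i-1)!\,2^{i-2j+2\alpha+4}}{(j-\alpha-3)!\,(j-i)!}.$$
   Context: $D_x^i$ is the $i$-fold derivative; $(x^{-1}D_x)^k$ is the $k$-fold application of $y\mapsto x^{-1}y'$. *)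

From Stdlib Require Import Reals ZArith Arith.
Open Scope R_scope.

Definition is_deriv_seq (N : nat) (f : R -> R) (d : nat -> R -> R) : Prop :=
  (forall x, 0 < x -> d 0%nat x = f x) /\
  (forall (k : nat) (x : R), (k < N)%nat -> 0 < x ->
     derivable_pt_lim (d k) x (d (S k) x)).

Definition is_CN_on_pos (N : nat) (y : R -> R) (d : nat -> R -> R) : Prop :=
  is_deriv_seq N y d /\ (forall x, 0 < x -> continuity_pt (d N) x).

Definition is_xinvD_seq (N : nat) (g : R -> R) (e : nat -> R -> R) : Prop :=
  (forall x, 0 < x -> e 0%nat x = g x) /\
  (forall (k : nat) (x : R), (k < N)%nat -> 0 < x ->
     exists l, derivable_pt_lim (e k) x l /\ e (S k) x = / x * l).

Definition A_coef (alpha i : nat) : R :=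
  INR (fact (alpha + 1)) / INR (fact (i - 1)) *
  sum_f (Nat.max i (alpha + 3)) (2 * alpha + 4) (fun j =>
    (-1) ^ (i + j) * Binomial.C (2 * alpha + 4) j *
    (INR (fact (2 * j - i - 1)) *
     powerRZ 2 (Z.of_nat i - 2 * Z.of_nat j + 2 * Z.of_nat alpha + 4)%Z)
    / (INR (fact (j - alpha - 3)) * INR (fact (j - i)))).

From Stdlib Require Import Reals ZArith Arith Lia Lra.
Open Scope R_scope.

(* With t = x^2/2 the operator x^{-1} D_x is D_t.  Expanding, (x^{-1} D_x)^k [x^m y]
   = sum_i b(m,k,i) x^(m-2k+i) y^(i), where the coefficients b obey a simple
   recursion in k.  For m = 2p, Leibniz's rule in t applied to x^(2p) y = (2t)^p y
   writes b(2p,k,.) through the coefficients b(0,.,.) of (x^{-1} D_x)^j alone,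
   and these are Bessel-polynomial coefficients in closed form.  For
   m = 2 alpha + 2, k = 2 alpha + 4 the Leibniz terms with j < alpha + 3 vanish,
   since D_t^(k-j) kills (2t)^(alpha+1); this also kills the y-term, and what is
   left is the sum defining A_i^alpha. *)

Fixpoint rsum (n : nat) (f : nat -> R) : R :=
  match n with O => 0 | S n' => rsum n' f + f n' end.

Lemma rsum_ext n f g : (forall i, (i < n)%nat -> f i = g i) -> rsum n f = rsum n g.
Proof.
  induction n; simpl; intros H; auto.
  rewrite IHn by (intros; apply H; lia). rewrite H by lia. reflexivity.
Qed.

Lemma rsum_eq0 n f : (forall i, (i < n)%nat -> f i = 0) -> rsum n f = 0.
Proof.
  induction n; simpl; intros H; [ring|].
  rewrite IHn by (intros; apply H; lia). rewrite H by lia. ring.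
Qed.

Lemma rsum_plus n f g : rsum n (fun i => f i + g i) = rsum n f + rsum n g.
Proof. induction n; simpl; [ring | rewrite IHn; ring]. Qed.

Lemma rsum_scal n c f : rsum n (fun i => c * f i) = c * rsum n f.
Proof. induction n; simpl; [ring | rewrite IHn; ring]. Qed.

Lemma rsum_Sl n f : rsum (S n) f = f O + rsum n (fun i => f (S i)).
Proof. induction n; simpl in *; [ring | rewrite IHn; ring]. Qed.

Lemma rsum_rev n f : rsum n f = rsum n (fun i => f (n - 1 - i)%nat).
Proof.
  induction n; auto.
  rewrite (rsum_Sl n (fun i => f (S n - 1 - i)%nat)).
  change (rsum (S n) f) with (rsum n f + f n). rewrite IHn.
  replace (S n - 1 - 0)%nat with n by lia.
  rewrite Rplus_comm. f_equal. apply rsum_ext. intros. f_equal. lia.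
Qed.

Lemma rsum_split a c g : rsum (a + c) g = rsum a g + rsum c (fun i => g (i + a)%nat).
Proof.
  induction c.
  - rewrite Nat.add_0_r. simpl. ring.
  - replace (a + S c)%nat with (S (a + c)) by lia. simpl. rewrite IHc.
    replace (c + a)%nat with (a + c)%nat by lia. ring.
Qed.

Lemma sum_f_rsum s n g : sum_f s n g = rsum (S (n - s)) (fun i => g (i + s)%nat).
Proof.
  unfold sum_f. generalize (n - s)%nat. intros k.
  induction k; simpl in *; [ring | rewrite IHk; ring].
Qed.

Lemma derivable_pt_lim_rsum n (f : nat -> R -> R) (f' : nat -> R) x :
  (forall i, (i < n)%nat -> derivable_pt_lim (f i) x (f' i)) ->
  derivable_pt_lim (fun t => rsum n (fun i => f i t)) x (rsum n f').
Proof.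
  induction n; intros H; simpl.
  - apply (derivable_pt_lim_const 0).
  - apply (derivable_pt_lim_plus (fun t => rsum n (fun i => f i t)) (f n)).
    + apply IHn. intros; apply H; lia.
    + apply H; lia.
Qed.

Definition shiftr0 (f : nat -> R) (i : nat) : R :=
  match i with O => 0 | S i' => f i' end.

(* [xinvD_coef m k i] is b(m,k,i): the recursion comes from
   x^{-1} D_x [x^(m-2k+i) y^(i)] = (m-2k+i) x^(m-2(k+1)+i) y^(i) + x^(m-2(k+1)+i+1) y^(i+1). *)
Fixpoint xinvD_coef (m : R) (k i : nat) : R :=
  match k with
  | O => match i with O => 1 | S _ => 0 end
  | S k' => (m - 2 * INR k' + INR i) * xinvD_coef m k' i + shiftr0 (xinvD_coef m k') i
  end.

Lemma xinvD_coef_gt m k i : (k < i)%nat -> xinvD_coef m k i = 0.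
Proof.
  revert i; induction k; intros i H; simpl.
  - destruct i; [lia | auto].
  - destruct i; [lia |]. simpl. rewrite !IHk by lia. ring.
Qed.

Lemma xinvD_coef0_const r : xinvD_coef 0 (S r) 0 = 0.
Proof. induction r; simpl in *; [| rewrite IHr]; ring. Qed.

(* Unlike [Binomial.C], this vanishes for l > k, which makes the Leibniz sum
   below telescope without side conditions. *)
Fixpoint binom (k l : nat) : R :=
  match k with
  | O => match l with O => 1 | S _ => 0 end
  | S k' => binom k' l + shiftr0 (binom k') l
  end.

Lemma binom_gt k l : (k < l)%nat -> binom k l = 0.
Proof.
  revert l; induction k; intros l H; simpl.
  - destruct l; [lia | auto].
  - destruct l; [lia |]. simpl. rewrite !IHk by lia. ring.
Qed.

Lemma binom_0 k : binom k 0 = 1.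
Proof. induction k; simpl; auto. rewrite IHk; ring. Qed.

Lemma binom_C k l : (l <= k)%nat -> binom k l = Binomial.C k l.
Proof.
  assert (C_n0 : forall n, Binomial.C n 0 = 1).
  { intros n. unfold Binomial.C. rewrite Nat.sub_0_r. simpl. field. apply INR_fact_neq_0. }
  assert (C_nn : forall n, Binomial.C n n = 1).
  { intros n. unfold Binomial.C. rewrite Nat.sub_diag. simpl. field. apply INR_fact_neq_0. }
  revert l; induction k; intros l H.
  - replace l with 0%nat by lia. simpl. now rewrite C_n0.
  - destruct l as [|l]; [now rewrite binom_0, C_n0 |].
    simpl. destruct (Nat.eq_dec l k) as [-> | Hlk].
    + rewrite binom_gt, IHk, !C_nn by lia. ring.
    + rewrite !IHk by lia. rewrite Rplus_comm. apply pascal. lia.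
Qed.

Fixpoint falling (p l : nat) : R :=
  match l with O => 1 | S l' => falling p l' * (INR p - INR l') end.

Lemma factS n : INR (fact (S n)) = (INR n + 1) * INR (fact n).
Proof. change (fact (S n)) with (S n * fact n)%nat. rewrite mult_INR, S_INR. ring. Qed.

Lemma falling_fact p l : (l <= p)%nat -> falling p l = INR (fact p) / INR (fact (p - l)).
Proof.
  induction l; intros H; simpl falling.
  - rewrite Nat.sub_0_r. field. apply INR_fact_neq_0.
  - rewrite IHl by lia.
    replace (p - l)%nat with (S (p - S l)) by lia.
    rewrite factS, <- minus_INR by lia.
    replace (INR (p - S l) + 1) with (INR (p - l)) by (rewrite <- S_INR; f_equal; lia).
    field. split; [apply INR_fact_neq_0 | apply not_0_INR; lia].
Qed.

Lemma falling_gt p l : (p < l)%nat -> falling p l = 0.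
Proof.
  intros H. replace l with (S p + (l - S p))%nat by lia.
  induction (l - S p)%nat as [|n IHn]; simpl falling.
  - rewrite Nat.add_0_r, Rminus_diag. ring.
  - rewrite Nat.add_succ_r. simpl falling. simpl falling in IHn. rewrite IHn. ring.
Qed.

(* Leibniz's rule for D_t^k [(2t)^p y], read off on the coefficients. *)
Lemma xinvD_coef_even p k i :
  xinvD_coef (2 * INR p) k i =
  rsum (S k) (fun l => binom k l * 2 ^ l * falling p l * xinvD_coef 0 (k - l) i).
Proof.
  revert i; induction k; intros i.
  - simpl. destruct i; ring.
  - assert (Hshift : shiftr0 (xinvD_coef (2 * INR p) k) i =
      rsum (S k) (fun l => binom k l * 2 ^ l * falling p l * shiftr0 (xinvD_coef 0 (k - l)) i)).
    { destruct i; cbn [shiftr0]; [symmetry; apply rsum_eq0; intros; ring | apply IHk]. }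
    assert (Hlow : rsum (S (S k)) (fun l => binom k l * 2 ^ l * falling p l * xinvD_coef 0 (S k - l) i)
      = rsum (S k) (fun l => binom k l * 2 ^ l * falling p l *
          ((0 - 2 * INR (k - l) + INR i) * xinvD_coef 0 (k - l) i + shiftr0 (xinvD_coef 0 (k - l)) i))).
    { change (rsum (S (S k)) ?F) with (rsum (S k) F + F (S k)); cbv beta.
      rewrite binom_gt by lia. rewrite Rmult_0_l, !Rmult_0_l, Rplus_0_r.
      apply rsum_ext. intros l Hl. now replace (S k - l)%nat with (S (k - l)) by lia. }
    assert (Hhigh : rsum (S (S k)) (fun l => shiftr0 (binom k) l * 2 ^ l * falling p l * xinvD_coef 0 (S k - l) i)
      = rsum (S k) (fun l => binom k l * 2 ^ l * falling p l * (2 * (INR p - INR l)) * xinvD_coef 0 (k - l) i)).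
    { rewrite rsum_Sl. simpl shiftr0. rewrite !Rmult_0_l, Rplus_0_l.
      apply rsum_ext. intros l _. simpl falling. simpl pow.
      replace (S k - S l)%nat with (k - l)%nat by lia. ring. }
    simpl xinvD_coef at 1. simpl binom.
    rewrite Hshift, IHk, <- rsum_scal.
    rewrite (rsum_ext (S (S k)) _ (fun l => binom k l * 2 ^ l * falling p l * xinvD_coef 0 (S k - l) i
        + shiftr0 (binom k) l * 2 ^ l * falling p l * xinvD_coef 0 (S k - l) i))
      by (intros; ring).
    rewrite rsum_plus, Hlow, Hhigh, <- !rsum_plus.
    apply rsum_ext. intros l Hl. rewrite minus_INR by lia. ring.
Qed.

Definition bessel_coef (a c : nat) : R :=
  (-1) ^ c * INR (fact (a + 2 * c)) / (2 ^ c * INR (fact a) * INR (fact c)).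

Lemma bessel_coef_0 a : bessel_coef a 0 = 1.
Proof.
  unfold bessel_coef. rewrite Nat.mul_0_r, Nat.add_0_r. simpl.
  field. apply INR_fact_neq_0.
Qed.

Lemma bessel_coef_0S c :
  bessel_coef 0 (S c) = (0 - 2 * INR (S c) + INR 1) * bessel_coef 0 c.
Proof.
  unfold bessel_coef. simpl Nat.add.
  replace (c + S (c + 0))%nat with (S (2 * c)) by lia.
  replace (c + (c + 0))%nat with (2 * c)%nat by lia.
  rewrite !factS, !S_INR, mult_INR. simpl. pose proof (pos_INR c).
  field. repeat split; try apply INR_fact_neq_0; try apply pow_nonzero; lra.
Qed.

Lemma bessel_coef_SS a c : bessel_coef (S a) (S c) =
  (0 - 2 * INR (S (S a + c)) + INR (S (S a))) * bessel_coef (S a) c + bessel_coef a (S c).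
Proof.
  unfold bessel_coef.
  replace (S a + 2 * S c)%nat with (S (S (S (a + 2 * c)))) by lia.
  replace (S a + 2 * c)%nat with (S (a + 2 * c)) by lia.
  replace (a + 2 * S c)%nat with (S (S (a + 2 * c))) by lia.
  rewrite !factS. repeat rewrite ?S_INR, ?plus_INR, ?mult_INR. rewrite INR_0. simpl pow.
  pose proof (pos_INR c). pose proof (pos_INR a).
  field. repeat split; try apply INR_fact_neq_0; try apply pow_nonzero; lra.
Qed.

Lemma xinvD_coef0_bessel r a c :
  r = (a + c)%nat -> xinvD_coef 0 (S r) (S a) = bessel_coef a c.
Proof.
  revert a c; induction r; intros a c H.
  - replace a with 0%nat by lia. replace c with 0%nat by lia.
    rewrite bessel_coef_0. simpl. ring.
  - change (xinvD_coef 0 (S (S r)) (S a)) with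
      ((0 - 2 * INR (S r) + INR (S a)) * xinvD_coef 0 (S r) (S a) + xinvD_coef 0 (S r) a).
    destruct c as [|c].
    + replace a with (S r) by lia.
      rewrite xinvD_coef_gt, (IHr r 0%nat), !bessel_coef_0 by lia. ring.
    + rewrite (IHr a c) by lia. destruct a as [|a].
      * rewrite xinvD_coef0_const. replace r with c by lia. rewrite bessel_coef_0S. ring.
      * rewrite (IHr a (S c)) by lia. rewrite bessel_coef_SS.
        replace (S r) with (S (S a + c)) by lia. ring.
Qed.

Lemma xinvD_coef_even_const p k : (p < k)%nat -> xinvD_coef (2 * INR p) k 0 = 0.
Proof.
  intros Hpk. rewrite xinvD_coef_even. apply rsum_eq0. intros l Hl.
  destruct (Nat.lt_ge_cases p l).
  - rewrite falling_gt by lia. ring.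
  - replace (k - l)%nat with (S (k - l - 1)) by lia. rewrite xinvD_coef0_const. ring.
Qed.

Lemma xinvD_coef_even_term p k j a : (k - p <= j)%nat -> (S a <= j <= k)%nat ->
  binom k (k - j) * 2 ^ (k - j) * falling p (k - j) * xinvD_coef 0 j (S a) =
  INR (fact p) / INR (fact a) *
  ((-1) ^ (S a + j) * Binomial.C k j *
   (INR (fact (2 * j - S a - 1)) *
    powerRZ 2 (Z.of_nat (S a) - 2 * Z.of_nat j + Z.of_nat k))
   / (INR (fact (j + p - k)) * INR (fact (j - S a)))).
Proof.
  intros Hpj Haj.
  set (c := (j - S a)%nat).
  rewrite binom_C, <- pascal_step1 by lia.
  rewrite falling_fact by lia.
  replace j with (S (a + c)) at 4 by (unfold c; lia).
  rewrite (xinvD_coef0_bessel (a + c) a c) by reflexivity.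
  replace (p - (k - j))%nat with (j + p - k)%nat by lia.
  replace (2 * j - S a - 1)%nat with (a + 2 * c)%nat by (unfold c; lia).
  replace (Z.of_nat (S a) - 2 * Z.of_nat j + Z.of_nat k)%Z
    with (Z.of_nat (k - j) + - Z.of_nat c)%Z by (unfold c; lia).
  rewrite powerRZ_add, powerRZ_neg', <- !pow_powerRZ by lra.
  replace (S a + j)%nat with (2 * S a + c)%nat by (unfold c; lia).
  rewrite pow_add, pow_1_even.
  unfold bessel_coef. fold c.
  field. repeat split; try apply INR_fact_neq_0; apply pow_nonzero; lra.
Qed.

Lemma INR_even_S n : INR (2 * n + 2) = 2 * INR (n + 1).
Proof. rewrite !plus_INR, mult_INR. simpl. ring. Qed.

Lemma xinvD_coef_A alpha i : (1 <= i <= 2 * alpha + 4)%nat ->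
  xinvD_coef (INR (2 * alpha + 2)) (2 * alpha + 4) i = A_coef alpha i.
Proof.
  intros Hi.
  set (N := (2 * alpha + 4)%nat).
  set (s := Nat.max i (alpha + 3)).
  rewrite INR_even_S, xinvD_coef_even, rsum_rev.
  replace (S N) with (s + S (N - s))%nat by lia.
  rewrite rsum_split, rsum_eq0, Rplus_0_l.
  2:{ intros j Hj. replace (s + S (N - s) - 1 - j)%nat with (N - j)%nat by lia.
      destruct (Nat.lt_ge_cases j i).
      - rewrite (xinvD_coef_gt 0 (N - (N - j)) i) by lia. ring.
      - rewrite falling_gt by lia. ring. }
  unfold A_coef. fold N s. rewrite sum_f_rsum, <- rsum_scal.
  apply rsum_ext. intros j Hj.
  replace (s + S (N - s) - 1 - (j + s))%nat with (N - (j + s))%nat by lia.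
  destruct i as [|a]; [lia |].
  replace (N - (N - (j + s)))%nat with (j + s)%nat by lia.
  rewrite xinvD_coef_even_term by lia.
  replace (j + s + (alpha + 1) - N)%nat with (j + s - alpha - 3)%nat by lia.
  replace (Z.of_nat (S a) - 2 * Z.of_nat (j + s) + Z.of_nat N)%Z
    with (Z.of_nat (S a) - 2 * Z.of_nat (j + s) + 2 * Z.of_nat alpha + 4)%Z by lia.
  now replace (S a - 1)%nat with a by lia.
Qed.

Lemma derivable_pt_lim_pos_ext (f g : R -> R) x l :
  (forall t, 0 < t -> f t = g t) -> 0 < x ->
  derivable_pt_lim g x l -> derivable_pt_lim f x l.
Proof.
  intros Heq Hx Hg eps He.
  destruct (Hg eps He) as [del Hd].
  assert (Hpos : 0 < Rmin del x) by (apply Rmin_pos; [apply cond_pos | lra]).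
  exists (mkposreal _ Hpos). intros h Hh0 Hh. simpl in Hh.
  pose proof (Rmin_l del x). pose proof (Rmin_r del x).
  pose proof (Rle_abs (- h)). rewrite Rabs_Ropp in *.
  rewrite (Heq x), (Heq (x + h)) by lra. apply Hd; auto; lra.
Qed.

Lemma powerRZ_m1 x : x <> 0 -> powerRZ x (-1) = / x.
Proof. intros. simpl. now rewrite Rmult_1_r. Qed.

Lemma powerRZ_m2 x : x <> 0 -> powerRZ x (-2) = / x * / x.
Proof. intros. simpl. field. auto. Qed.

Lemma derivable_pt_lim_powerRZ z x : 0 < x ->
  derivable_pt_lim (fun t => powerRZ t z) x (IZR z * powerRZ x z / x).
Proof.
  intros Hx.
  apply (derivable_pt_lim_pos_ext _ (fun t => Rpower t (IZR z))); auto.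
  - intros t Ht. now apply powerRZ_Rpower.
  - replace (IZR z * powerRZ x z / x) with (IZR z * Rpower x (IZR z - 1)).
    + now apply derivable_pt_lim_power.
    + replace (IZR z - 1) with (IZR (z + -1)) by (rewrite plus_IZR; simpl; ring).
      rewrite <- powerRZ_Rpower, powerRZ_add, powerRZ_m1 by lra. unfold Rdiv. ring.
Qed.

Definition xinvD_exponent (m k i : nat) : Z := (Z.of_nat m - 2 * Z.of_nat k + Z.of_nat i)%Z.

Definition xinvD_expansion (d : nat -> R -> R) (m k : nat) (x : R) : R :=
  rsum (S k) (fun i => xinvD_coef (INR m) k i * powerRZ x (xinvD_exponent m k i) * d i x).

Lemma xinvD_expansion_0 d m x : xinvD_expansion d m 0 x = x ^ m * d 0%nat x.
Proof.
  unfold xinvD_expansion, xinvD_exponent. simpl.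
  rewrite Z.add_0_r, Z.sub_0_r, pow_powerRZ. ring.
Qed.

Lemma xinvD_expansion_derive (d : nat -> R -> R) m k x : 0 < x ->
  (forall i, (i <= k)%nat -> derivable_pt_lim (d i) x (d (S i) x)) ->
  derivable_pt_lim (xinvD_expansion d m k) x (x * xinvD_expansion d m (S k) x).
Proof.
  intros Hx Hd.
  set (b := xinvD_coef (INR m) k). set (z := xinvD_exponent m k).
  replace (x * xinvD_expansion d m (S k) x) with
    (rsum (S k) (fun i => b i * (IZR (z i) * powerRZ x (z i) / x) * d i x
                          + b i * powerRZ x (z i) * d (S i) x)).
  - apply derivable_pt_lim_rsum. intros i Hi.
    apply (derivable_pt_lim_mult (mult_real_fct (b i) (fun t => powerRZ t (z i))) (d i)).
    + apply derivable_pt_lim_scal, derivable_pt_lim_powerRZ; auto.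
    + apply Hd; lia.
  - unfold xinvD_expansion. simpl xinvD_coef. fold b.
    rewrite (rsum_ext (S (S k)) _ (fun i =>
       (INR m - 2 * INR k + INR i) * b i * powerRZ x (xinvD_exponent m (S k) i) * d i x
       + shiftr0 b i * powerRZ x (xinvD_exponent m (S k) i) * d i x))
      by (intros; ring).
    assert (Hbk : b (S k) = 0) by (apply xinvD_coef_gt; lia).
    rewrite (rsum_plus (S (S k))), (rsum_Sl (S k) (fun i => shiftr0 b i * _ * d i x)).
    change (rsum (S (S k)) ?F) with (rsum (S k) F + F (S k)). cbv beta.
    rewrite Hbk. cbn [shiftr0].
    rewrite !Rmult_0_r, !Rmult_0_l, Rplus_0_r, Rplus_0_l.
    rewrite <- rsum_plus, <- rsum_scal. apply rsum_ext. intros i Hi.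
    replace (xinvD_exponent m (S k) i) with (z i + -2)%Z by (unfold z, xinvD_exponent; lia).
    replace (xinvD_exponent m (S k) (S i)) with (z i + -1)%Z by (unfold z, xinvD_exponent; lia).
    rewrite !powerRZ_add, powerRZ_m1, powerRZ_m2 by lra.
    replace (IZR (z i)) with (INR m - 2 * INR k + INR i)
      by (unfold z, xinvD_exponent; rewrite plus_IZR, minus_IZR, mult_IZR, <- !INR_IZR_INZ; simpl; ring).
    field. lra.
Qed.

Lemma is_xinvD_seq_intro N g E :
  (forall x, 0 < x -> E 0%nat x = g x) ->
  (forall k x, (k < N)%nat -> 0 < x -> derivable_pt_lim (E k) x (x * E (S k) x)) ->
  is_xinvD_seq N g E.
Proof.
  intros H0 HS. split; auto.
  intros k x Hk Hx. exists (x * E (S k) x). split; auto. field. lra.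
Qed.

Lemma is_xinvD_seq_unique N g e E :
  is_xinvD_seq N g e ->
  (forall x, 0 < x -> E 0%nat x = g x) ->
  (forall k x, (k < N)%nat -> 0 < x -> derivable_pt_lim (E k) x (x * E (S k) x)) ->
  forall k x, (k <= N)%nat -> 0 < x -> e k x = E k x.
Proof.
  intros [He0 HeS] H0 HS. induction k; intros x Hk Hx.
  - now rewrite He0, H0.
  - destruct (HeS k x) as [l [Hl ->]]; [lia | auto |].
    assert (Hek : derivable_pt_lim (e k) x (x * E (S k) x)).
    { apply (derivable_pt_lim_pos_ext _ (E k)); [| exact Hx |].
      - intros t Ht. apply IHk; [lia | auto].
      - apply HS; [lia | auto]. }
    rewrite (uniqueness_limite _ _ _ _ Hl Hek). field. lra.
Qed.

Lemma xinvD_expansion_A alpha d x : 0 < x ->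
  x ^ 2 * xinvD_expansion d (2 * alpha + 2) (2 * alpha + 4) x =
  sum_f 1 (2 * alpha + 4) (fun i =>
    A_coef alpha i * powerRZ x (Z.of_nat i - 2 * Z.of_nat alpha - 4)%Z * d i x).
Proof.
  intros Hx. unfold xinvD_expansion.
  rewrite rsum_Sl, INR_even_S, xinvD_coef_even_const, <- INR_even_S by lia.
  rewrite !Rmult_0_l, Rplus_0_l, sum_f_rsum, <- rsum_scal.
  replace (S (2 * alpha + 4 - 1)) with (2 * alpha + 4)%nat by lia.
  apply rsum_ext. intros i Hi.
  rewrite Nat.add_1_r, xinvD_coef_A by lia.
  replace (xinvD_exponent (2 * alpha + 2) (2 * alpha + 4) (S i))
    with (Z.of_nat (S i) - 2 * Z.of_nat alpha - 4 + -2)%Z by (unfold xinvD_exponent; lia).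
  rewrite powerRZ_add, powerRZ_m2 by lra. simpl pow. field. lra.
Qed.

Theorem corollary5p2 (alpha : nat) (y : R -> R) (d : nat -> R -> R) :
  is_CN_on_pos (2 * alpha + 4) y d ->
  (exists e, is_xinvD_seq (2 * alpha + 4)
               (fun x => x ^ (2 * alpha + 2) * y x) e) /\
  (forall e, is_xinvD_seq (2 * alpha + 4)
               (fun x => x ^ (2 * alpha + 2) * y x) e ->
   forall x, 0 < x ->
     (-1) ^ (alpha + 1) * x ^ 2 * e (2 * alpha + 4)%nat x =
     (-1) ^ (alpha + 1) *
       sum_f 1 (2 * alpha + 4) (fun i =>
         A_coef alpha i *
         powerRZ x (Z.of_nat i - 2 * Z.of_nat alpha - 4)%Z * d i x)).
Proof.
  intros [[Hy Hd] _].
  set (E := xinvD_expansion d (2 * alpha + 2)).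
  assert (HE0 : forall x, 0 < x -> E 0%nat x = x ^ (2 * alpha + 2) * y x).
  { intros x Hx. unfold E. now rewrite xinvD_expansion_0, Hy. }
  assert (HES : forall k x, (k < 2 * alpha + 4)%nat -> 0 < x ->
            derivable_pt_lim (E k) x (x * E (S k) x)).
  { intros k x Hk Hx. apply xinvD_expansion_derive; auto.
    intros i Hi. apply Hd; [lia | auto]. }
  split.
  - exists E. now apply is_xinvD_seq_intro.
  - intros e He x Hx.
    rewrite (is_xinvD_seq_unique _ _ _ _ He HE0 HES (2 * alpha + 4) x) by (lia || lra).
    rewrite Rmult_assoc. f_equal. now apply xinvD_expansion_A.
Qed.
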